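(* Let $n\ge0$, $k\ge1$ and $1\le j\le k$. Then for every formula $\alpha$, $\vdash_{L_n^k}\circ^j\alpha\leftrightarrow\circ^j\neg\alpha$.
   Context: Formulas are built from a countable set of propositional variables using unary $\neg,\circ$ and binary $\land,\lor,\to$; $\circ^0\alpha=\alpha$, $\circ^{m+1}\alpha=\circ(\circ^m\alpha)$, $\alpha\leftrightarrow\beta:=(\alpha\to\beta)\land(\beta\to\alpha)$. mbC is the Hilbert calculus with the axiom schemas of a standard axiomatization of positive classical propositional logic in $\land,\lor,\to$, plus (TND) $\alpha\lor\neg\alpha$ and (bc1) $\circ\alpha\to(\alpha\to(\neg\alpha\to\beta))$, modus ponens being the only rule; mbCciw is mbC plus (ciw) $\circ\alpha\lor(\alpha\land\neg\alpha)$. For $n\ge0$, $k\ge1$, $L_n^k$ is mbCciw plus (cc$^n$) $\circ^{n+2}\alpha$, (dn) $\neg\neg\alpha\leftrightarrow\alpha$, and (ip$^j$) $\neg\circ^j\neg\alpha\leftrightarrow\neg\circ^j\alpha$ for each $1\le j<k$. $\vdash_L$ denotes derivability in $L$. *)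

From Stdlib Require Import Arith.

Inductive formula : Type :=
  | Var  : nat -> formula
  | Neg  : formula -> formula
  | Circ : formula -> formula
  | And  : formula -> formula -> formula
  | Or   : formula -> formula -> formula
  | Imp  : formula -> formula -> formula.

Fixpoint circ_iter (m : nat) (a : formula) : formula :=
  match m with
  | 0 => a
  | S m' => Circ (circ_iter m' a)
  end.

Definition Iff (a b : formula) : formula := And (Imp a b) (Imp b a).

Inductive cpl_pos_axiom : formula -> Prop :=
  | Ax1 a b : cpl_pos_axiom (Imp a (Imp b a))
  | Ax2 a b c : cpl_pos_axiom (Imp (Imp a b) (Imp (Imp a (Imp b c)) (Imp a c)))
  | Ax3 a b : cpl_pos_axiom (Imp a (Imp b (And a b)))
  | Ax4 a b : cpl_pos_axiom (Imp (And a b) a)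
  | Ax5 a b : cpl_pos_axiom (Imp (And a b) b)
  | Ax6 a b : cpl_pos_axiom (Imp a (Or a b))
  | Ax7 a b : cpl_pos_axiom (Imp b (Or a b))
  | Ax8 a b c : cpl_pos_axiom (Imp (Imp a c) (Imp (Imp b c) (Imp (Or a b) c)))
  | Ax9 a b : cpl_pos_axiom (Or a (Imp a b)).

Inductive mbC_axiom : formula -> Prop :=
  | mbC_pos a : cpl_pos_axiom a -> mbC_axiom a
  | mbC_TND a : mbC_axiom (Or a (Neg a))
  | mbC_bc1 a b : mbC_axiom (Imp (Circ a) (Imp a (Imp (Neg a) b))).

Inductive mbCciw_axiom : formula -> Prop :=
  | ciw_mbC a : mbC_axiom a -> mbCciw_axiom a
  | ciw_ciw a : mbCciw_axiom (Or (Circ a) (And a (Neg a))).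

Inductive Lnk_axiom (n k : nat) : formula -> Prop :=
  | Lnk_base a : mbCciw_axiom a -> Lnk_axiom n k a
  | Lnk_cc a : Lnk_axiom n k (circ_iter (n + 2) a)
  | Lnk_dn a : Lnk_axiom n k (Iff (Neg (Neg a)) a)
  | Lnk_ip j a : 1 <= j -> j < k ->
      Lnk_axiom n k (Iff (Neg (circ_iter j (Neg a))) (Neg (circ_iter j a))).

Inductive Lnk_derivable (n k : nat) : formula -> Prop :=
  | D_ax a : Lnk_axiom n k a -> Lnk_derivable n k a
  | D_mp a b : Lnk_derivable n k a -> Lnk_derivable n k (Imp a b) ->
               Lnk_derivable n k b.

(* Write [x] for [circ_iter m a] and [y] for [circ_iter m (Neg a)].  By (ciw) and
   (bc1), [o x -> o y] holds as soon as the contradiction [y & ~y] entails the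
   contradiction [x & ~x]: either [o y] already holds, or [y & ~y] yields [x] and
   [~x], which together with [o x] explode.  For [m = 0] the two contradictions
   [a & ~a] and [~a & ~~a] are interderivable by (dn); for [0 < m < k] they are
   interderivable by the induction hypothesis [x <-> y] together with
   (ip^m) [~y <-> ~x]. *)
From Stdlib Require Import List Lia.
Import ListNotations.

Inductive deriv (Ax : formula -> Prop) (G : list formula) : formula -> Prop :=
  | deriv_ax a : Ax a -> deriv Ax G a
  | deriv_hyp a : In a G -> deriv Ax G a
  | deriv_mp a b : deriv Ax G a -> deriv Ax G (Imp a b) -> deriv Ax G b.

Section PositiveLogic.

Variable Ax : formula -> Prop.
Hypothesis Ax_pos : forall a, cpl_pos_axiom a -> Ax a.

Lemma deriv_pos G a : cpl_pos_axiom a -> deriv Ax G a.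
Proof. intro H; apply deriv_ax, Ax_pos, H. Qed.

Lemma deriv_imp_refl G a : deriv Ax G (Imp a a).
Proof.
  eapply deriv_mp; [apply deriv_pos, (Ax1 a (Imp a a))|].
  eapply deriv_mp; [apply deriv_pos, (Ax1 a a)|].
  apply deriv_pos, Ax2.
Qed.

Lemma deriv_weaken G G' a : incl G G' -> deriv Ax G a -> deriv Ax G' a.
Proof.
  intros HG H; induction H as [b Hb | b Hb | b c _ IHb _ IHbc].
  - apply deriv_ax, Hb.
  - apply deriv_hyp, HG, Hb.
  - eapply deriv_mp; [exact IHb | exact IHbc].
Qed.

Lemma deduction G a b : deriv Ax (a :: G) b -> deriv Ax G (Imp a b).
Proof.
  intro H; induction H as [c Hc | c Hc | c d _ IHc _ IHcd].
  - eapply deriv_mp; [apply deriv_ax, Hc | apply deriv_pos, Ax1].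
  - destruct Hc as [<- | Hc]; [apply deriv_imp_refl |].
    eapply deriv_mp; [apply deriv_hyp, Hc | apply deriv_pos, Ax1].
  - eapply deriv_mp; [exact IHcd |].
    eapply deriv_mp; [exact IHc | apply deriv_pos, Ax2].
Qed.

Lemma deriv_weaken_cons G a b : deriv Ax G b -> deriv Ax (a :: G) b.
Proof. apply deriv_weaken, incl_tl, incl_refl. Qed.

Lemma deriv_andl G a b : deriv Ax G (And a b) -> deriv Ax G a.
Proof. intro H; eapply deriv_mp; [exact H | apply deriv_pos, Ax4]. Qed.

Lemma deriv_andr G a b : deriv Ax G (And a b) -> deriv Ax G b.
Proof. intro H; eapply deriv_mp; [exact H | apply deriv_pos, Ax5]. Qed.

Lemma deriv_andI G a b : deriv Ax G a -> deriv Ax G b -> deriv Ax G (And a b).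
Proof.
  intros Ha Hb; eapply deriv_mp; [exact Hb |].
  eapply deriv_mp; [exact Ha | apply deriv_pos, Ax3].
Qed.

Lemma deriv_orE G a b c :
  deriv Ax G (Or a b) -> deriv Ax G (Imp a c) -> deriv Ax G (Imp b c) ->
  deriv Ax G c.
Proof.
  intros H Hac Hbc; eapply deriv_mp; [exact H |].
  eapply deriv_mp; [exact Hbc |].
  eapply deriv_mp; [exact Hac | apply deriv_pos, Ax8].
Qed.

Lemma deriv_imp_and_mono G a b c d :
  deriv Ax G (Imp a c) -> deriv Ax G (Imp b d) ->
  deriv Ax G (Imp (And a b) (And c d)).
Proof.
  intros Hac Hbd; apply deduction.
  assert (Hab : deriv Ax (And a b :: G) (And a b)) by (apply deriv_hyp; left; reflexivity).
  apply deriv_andI.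
  - eapply deriv_mp; [exact (deriv_andl _ _ _ Hab) | apply deriv_weaken_cons, Hac].
  - eapply deriv_mp; [exact (deriv_andr _ _ _ Hab) | apply deriv_weaken_cons, Hbd].
Qed.

Lemma deriv_imp_and_swap G a b c d :
  deriv Ax G (Imp a d) -> deriv Ax G (Imp b c) ->
  deriv Ax G (Imp (And a b) (And c d)).
Proof.
  intros Had Hbc; apply deduction.
  assert (Hab : deriv Ax (And a b :: G) (And a b)) by (apply deriv_hyp; left; reflexivity).
  apply deriv_andI.
  - eapply deriv_mp; [exact (deriv_andr _ _ _ Hab) | apply deriv_weaken_cons, Hbc].
  - eapply deriv_mp; [exact (deriv_andl _ _ _ Hab) | apply deriv_weaken_cons, Had].
Qed.

Section Consistency.

Hypothesis Ax_mbCciw : forall a, mbCciw_axiom a -> Ax a.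

Lemma deriv_circ_imp G x y :
  deriv Ax G (Imp (And y (Neg y)) (And x (Neg x))) ->
  deriv Ax G (Imp (Circ x) (Circ y)).
Proof.
  intro Hyx; apply deduction.
  eapply deriv_orE; [apply deriv_ax, Ax_mbCciw, ciw_ciw | apply deriv_imp_refl |].
  apply deduction.
  set (G' := And y (Neg y) :: Circ x :: G).
  assert (Hx : deriv Ax G' (And x (Neg x))).
  { eapply deriv_mp; [apply deriv_hyp; left; reflexivity |].
    do 2 apply deriv_weaken_cons; exact Hyx. }
  eapply deriv_mp; [exact (deriv_andr _ _ _ Hx) |].
  eapply deriv_mp; [exact (deriv_andl _ _ _ Hx) |].
  eapply deriv_mp; [apply deriv_hyp; right; left; reflexivity |].
  apply deriv_ax, Ax_mbCciw, ciw_mbC, mbC_bc1.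
Qed.

Lemma deriv_circ_iff G x y :
  deriv Ax G (Imp (And x (Neg x)) (And y (Neg y))) ->
  deriv Ax G (Imp (And y (Neg y)) (And x (Neg x))) ->
  deriv Ax G (Iff (Circ x) (Circ y)).
Proof. intros Hxy Hyx; apply deriv_andI; apply deriv_circ_imp; assumption. Qed.

End Consistency.

End PositiveLogic.

Section Lnk.

Variables n k : nat.

Lemma Lnk_axiom_pos a : cpl_pos_axiom a -> Lnk_axiom n k a.
Proof. intro H; apply Lnk_base, ciw_mbC, mbC_pos, H. Qed.

Lemma Lnk_derivable_of_deriv a : deriv (Lnk_axiom n k) [] a -> Lnk_derivable n k a.
Proof.
  intro H; remember [] as G eqn:HG; induction H as [a Ha | a Ha | a b _ IHa _ IHab].
  - apply D_ax, Ha.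
  - subst; destruct Ha.
  - eapply D_mp; [apply IHa | apply IHab]; exact HG.
Qed.

Lemma Lnk_circ_neg_iff G a :
  deriv (Lnk_axiom n k) G (Iff (Circ a) (Circ (Neg a))).
Proof.
  assert (Hdn : deriv (Lnk_axiom n k) G (Iff (Neg (Neg a)) a)) by apply deriv_ax, Lnk_dn.
  apply (deriv_circ_iff _ Lnk_axiom_pos (Lnk_base n k));
    apply (deriv_imp_and_swap _ Lnk_axiom_pos).
  - eapply (deriv_andr _ Lnk_axiom_pos); exact Hdn.
  - apply (deriv_imp_refl _ Lnk_axiom_pos).
  - apply (deriv_imp_refl _ Lnk_axiom_pos).
  - eapply (deriv_andl _ Lnk_axiom_pos); exact Hdn.
Qed.

Lemma Lnk_circ_iter_neg_iff G a m : 1 <= m -> m <= k ->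
  deriv (Lnk_axiom n k) G (Iff (circ_iter m a) (circ_iter m (Neg a))).
Proof.
  induction m as [| m IH]; intros Hm1 Hmk; [lia |].
  destruct m as [| m]; [apply Lnk_circ_neg_iff |].
  specialize (IH ltac:(lia) ltac:(lia)).
  assert (Hip : deriv (Lnk_axiom n k) G
      (Iff (Neg (circ_iter (S m) (Neg a))) (Neg (circ_iter (S m) a))))
    by (apply deriv_ax, Lnk_ip; lia).
  apply (deriv_circ_iff _ Lnk_axiom_pos (Lnk_base n k));
    apply (deriv_imp_and_mono _ Lnk_axiom_pos).
  - eapply (deriv_andl _ Lnk_axiom_pos); exact IH.
  - eapply (deriv_andr _ Lnk_axiom_pos); exact Hip.
  - eapply (deriv_andr _ Lnk_axiom_pos); exact IH.
  - eapply (deriv_andl _ Lnk_axiom_pos); exact Hip.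
Qed.

End Lnk.

Theorem theorem26 (n k j : nat) (hk : 1 <= k) (hj1 : 1 <= j) (hjk : j <= k)
  (a : formula) :
  Lnk_derivable n k (Iff (circ_iter j a) (circ_iter j (Neg a))).
Proof.
  apply Lnk_derivable_of_deriv, Lnk_circ_iter_neg_iff; assumption.
Qed.
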